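(* Let $D$ and $E$ be finite sets of cells, where a cell is a pair $(i,j)\in\mathbb{Z}^2$ (row $i$, column $j$), and let $f:D\to E$ be a picture. For $A\in D$ define $r(A)=\mathrm{row}(A)-\mathrm{row}(f(A))$, and for $T\in E$ define $r'(T)=r(f^{-1}(T))=\mathrm{row}(f^{-1}(T))-\mathrm{row}(T)$. Then: (a) if $A,B\in D$ lie in the same row with $B$ to the left of $A$, then $r(B)\le r(A)$; (b) if $A,B\in D$ lie in the same column with $A=(i,j)$ and $B=(i+1,j)$, then $r(B)\le r(A)$; (c) if $T,T'\in E$ lie in the same row with $T'$ to the left of $T$, then $r'(T)\le r'(T')$; (d) if $T,T'\in E$ lie in the same column with $T=(i,j)$ and $T'=(i+1,j)$, then $r'(T)\le r'(T')$.
   Context: Rows are numbered from top to bottom and columns from left to right, so the cell $(i,j)$ is weakly above and weakly right of $(i',j')$ iff $i\le i'$ and $j\ge j'$; ''to the left'' means smaller column index. Lexicographic order on cells: $(i,j)$ precedes $(i',j')$ if $i<i'$, or $i=i'$ and $j<j'$. A picture between finite sets of cells $D$ and $E$ is a bijection $f:D\to E$ such that (1) for distinct $A,B\in D$ with $A$ weakly above and weakly right of $B$, $f(A)$ precedes $f(B)$ lexicographically, and (2) for distinct $A',B'\in E$ with $A'$ weakly above and weakly right of $B'$, $f^{-1}(A')$ precedes $f^{-1}(B')$ lexicographically. *)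

From HB Require Import structures.
From mathcomp Require Import all_boot all_order all_algebra.
From mathcomp Require Import finmap.
Set Implicit Arguments. Unset Strict Implicit. Unset Printing Implicit Defensive.
Import Order.TTheory GRing.Theory Num.Theory.
Local Open Scope ring_scope.
Local Open Scope fset_scope.

Definition cell := (int * int)%type.
Definition crow (c : cell) : int := c.1.
Definition ccol (c : cell) : int := c.2.

(* [wAR a b] : a is weakly above and weakly right of b. *)
Definition wAR (a b : cell) : bool := (crow a <= crow b) && (ccol b <= ccol a).

Definition lexlt (a b : cell) : bool :=
  (crow a < crow b) || ((crow a == crow b) && (ccol a < ccol b)).

Definition is_picture (D E : {fset cell}) (f : D -> E) (g : E -> D) : Prop :=
  [/\ cancel f g, cancel g f,
      (forall A B : D, A != B -> wAR (val A) (val B) ->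
         lexlt (val (f A)) (val (f B)))
    & (forall A B : E, A != B -> wAR (val A) (val B) ->
         lexlt (val (g A)) (val (g B)))].

Definition rD (D E : {fset cell}) (f : D -> E) (A : D) : int :=
  crow (val A) - crow (val (f A)).
Definition rE (D E : {fset cell}) (g : E -> D) (T : E) : int :=
  crow (val (g T)) - crow (val T).

(* A picture f sends a pair A, B with A weakly above-right of B to f A, f B
   with row (f A) <= row (f B); if these rows are equal, then f B is weakly
   above-right of f A, and applying the picture condition for f^-1 gives
   row B <= row A.  Hence r = row - row o f cannot increase from A to B when
   B is at most one row below A, which covers (a) and (b); (c) and (d) are
   (a) and (b) for the picture f^-1, since r' is the negation of its r. *)

From HB Require Import structures.
From mathcomp Require Import all_boot all_order all_algebra.
From mathcomp Require Import finmap.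
From mathcomp Require Import zify.
Set Implicit Arguments. Unset Strict Implicit.
Import Order.TTheory GRing.Theory Num.Theory.
Local Open Scope ring_scope.

Lemma lexlt_row_le (a b : cell) : lexlt a b -> crow a <= crow b.
Proof. by rewrite /lexlt => /orP [|/andP [/eqP ->]]; lia. Qed.

Lemma lexlt_row_eq_col_lt (a b : cell) :
  lexlt a b -> crow a = crow b -> ccol a < ccol b.
Proof. by rewrite /lexlt => /orP [|/andP [_]] ab eab; lia. Qed.

Lemma is_picture_sym (D E : {fset cell}) (f : D -> E) (g : E -> D) :
  is_picture f g -> is_picture g f.
Proof. by case. Qed.

Section Picture.

Variables (D E : {fset cell}) (f : D -> E) (g : E -> D).
Hypothesis picture_fg : is_picture f g.

Lemma picture_row_le (A B : D) :
  A != B -> wAR (val A) (val B) -> crow (val (f A)) <= crow (val (f B)).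
Proof. by case: picture_fg => _ _ lex_f _ nAB /(lex_f _ _ nAB)/lexlt_row_le. Qed.

Lemma picture_row_eq (A B : D) :
  A != B -> wAR (val A) (val B) -> crow (val (f A)) = crow (val (f B)) ->
  crow (val B) <= crow (val A).
Proof.
case: picture_fg => fK _ lex_f lex_g nAB wAB eq_row.
have col_lt := lexlt_row_eq_col_lt (lex_f _ _ nAB wAB) eq_row.
have nfBA : f B != f A by apply: contra nAB => /eqP /(can_inj fK) ->.
have wfBA : wAR (val (f B)) (val (f A)) by apply/andP; split; lia.
by have := lexlt_row_le (lex_g _ _ nfBA wfBA); rewrite !fK.
Qed.

Lemma rD_le_of_wAR (A B : D) :
  A != B -> wAR (val A) (val B) -> crow (val B) <= crow (val A) + 1 ->
  rD f B <= rD f A.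
Proof.
move=> nAB wAB rowB; have fAB := picture_row_le nAB wAB; rewrite /rD.
have [lt_f | eq_f] : crow (val (f A)) < crow (val (f B)) \/
                     crow (val (f A)) = crow (val (f B)) by lia.
- lia.
- by have := picture_row_eq nAB wAB eq_f; lia.
Qed.

Lemma rD_le_left (A B : D) :
  crow (val B) = crow (val A) -> ccol (val B) < ccol (val A) -> rD f B <= rD f A.
Proof.
move=> rowB colB; apply: rD_le_of_wAR; last by lia.
- by apply/eqP => eAB; rewrite eAB ltxx in colB.
- by apply/andP; split; lia.
Qed.

Lemma rD_le_below (A B : D) :
  val B = (crow (val A) + 1, ccol (val A)) -> rD f B <= rD f A.
Proof.
move=> eB; have rowB : crow (val B) = crow (val A) + 1 by rewrite eB.
have colB : ccol (val B) = ccol (val A) by rewrite eB.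
apply: rD_le_of_wAR; last by lia.
- by apply/eqP => eAB; rewrite eAB in rowB; lia.
- by apply/andP; split; lia.
Qed.

End Picture.

Lemma rE_rD (D E : {fset cell}) (g : E -> D) (T : E) : rE g T = - rD g T.
Proof. by rewrite /rE /rD opprB. Qed.

Theorem lemma3p3 (D E : {fset cell}) (f : D -> E) (g : E -> D) :
  is_picture f g ->
  [/\ (forall A B : D, crow (val B) = crow (val A) -> ccol (val B) < ccol (val A) ->
         rD f B <= rD f A),
      (forall A B : D, val B = (crow (val A) + 1, ccol (val A)) ->
         rD f B <= rD f A),
      (forall T T' : E, crow (val T') = crow (val T) -> ccol (val T') < ccol (val T) ->
         rE g T <= rE g T')
    & (forall T T' : E, val T' = (crow (val T) + 1, ccol (val T)) ->
         rE g T <= rE g T')].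
Proof.
move=> pic; have pic' := is_picture_sym pic.
split=> [A B|A B|T T'|T T'].
- exact: (rD_le_left pic).
- exact: (rD_le_below pic).
- by move=> rowT' colT'; rewrite !rE_rD lerN2; exact: (rD_le_left pic').
- by move=> eT'; rewrite !rE_rD lerN2; exact: (rD_le_below pic').
Qed.
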